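(* Suppose $\hat q^{[k]}\in\Delta_\delta$ for all $k\ge1$. Then for every round $t\ge2$ and all $s\in\mathcal S$, $a\in\mathcal A$, regardless of the history up to round $t-1$ (i.e. conditionally on any such history), $\Pr\big((s^t,a^t)=(s,a)\big)\ge\alpha\delta$.
   Context: $\mathcal S,\mathcal A$ finite; $P$ is a transition kernel with $P(s'|s,a)\ge\alpha>0$ for all $s,s',a$, and $s^{t+1}\sim P(\cdot|s^t,a^t)$. $\Delta$ is the set of $q\in\mathbb R_+^{\mathcal S\times\mathcal A\times\mathcal S}$ with $\sum_{s,a,s'}q(s,a,s')=1$ and $\sum_{s',a}q(s',a,s)=\sum_{a,s'}q(s,a,s')$ for all $s$; $\Delta_\delta=\{q\in\Delta:\sum_{s'}q(s,a,s')\ge\delta\ \forall s,a\}$ for $\delta\in(0,1)$; the policy induced by $q$ is $\pi^q(a|s)=\sum_{s'}q(s,a,s')/\sum_{a',s'}q(s,a',s')$. In algorithm IHMDP-VCG, time is divided into episodes $k=1,2,\dots$; in each round $t$ of episode $k$ the action is drawn as $a^t\sim\pi^{[k]}(\cdot|s^t)$ with $\pi^{[k]}=\pi^{\hat q^{[k]}}$, where $\hat q^{[k]}$ is determined by the history before episode $k$. *)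

From mathcomp Require Import all_boot all_order all_algebra.
Set Implicit Arguments. Unset Strict Implicit. Unset Printing Implicit Defensive.
Import Order.TTheory GRing.Theory Num.Theory.
Local Open Scope ring_scope.

Section IHMDP.
Variables (R : realFieldType) (S A : finType).

Definition occ := {ffun S * A * S -> R}.

Definition in_Delta (q : occ) : Prop :=
  [/\ (forall x, 0 <= q x),
      \sum_x q x = 1
    & forall s : S, \sum_(s' : S) \sum_(a : A) q (s', a, s)
                    = \sum_(a : A) \sum_(s' : S) q (s, a, s')].

Definition in_Delta_delta (delta : R) (q : occ) : Prop :=
  in_Delta q /\ forall (s : S) (a : A), delta <= \sum_(s' : S) q (s, a, s').

Definition pi_of (q : occ) (a : A) (s : S) : R :=
  (\sum_(s' : S) q (s, a, s')) / (\sum_(a' : A) \sum_(s' : S) q (s, a', s')).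

(* A history of rounds 1..n is the list [(s^1,a^1); ...; (s^n,a^n)]. *)
Definition hist := seq (S * A).

(* Episode structure: [newep h] (h = history of rounds 1..t-1) says that
   round t starts a new episode; round 1 always starts episode 1.
   [epstart newep h] is the history before the start of the episode that
   contains round t = size h + 1. *)
Fixpoint epstart_len (newep : hist -> bool) (h : hist) (n : nat) : nat :=
  match n with
  | 0 => 0
  | n'.+1 => if newep (take n h) then n else epstart_len newep h n'
  end.

Definition epstart (newep : hist -> bool) (h : hist) : hist :=
  take (epstart_len newep h (size h)) h.

(* One step of the process: given history [pre] of rounds 1..t-1,
   probability that (s^t, a^t) = (s, a):
   s^t ~ mu (t = 1) or P(.|s^{t-1},a^{t-1}), then a^t ~ pi^{[k]}(.|s^t)
   where pi^{[k]} = pi^{qhat (history before episode k)}. *)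
Definition step_prob (mu : S -> R) (P : S -> A -> S -> R)
  (newep : hist -> bool) (qhat : hist -> occ) (pre : hist) (s : S) (a : A) : R :=
  (if pre is x :: r then let '(s', a') := last x r in P s' a' s else mu s)
  * pi_of (qhat (epstart newep pre)) a s.

Fixpoint traj_prob_aux (mu : S -> R) (P : S -> A -> S -> R)
  (newep : hist -> bool) (qhat : hist -> occ) (pre rest : hist) : R :=
  match rest with
  | [::] => 1
  | (s, a) :: r => step_prob mu P newep qhat pre s a
                   * traj_prob_aux mu P newep qhat (rcons pre (s, a)) r
  end.

Definition traj_prob mu P newep qhat (h : hist) : R :=
  traj_prob_aux mu P newep qhat [::] h.

End IHMDP.

From Pilot Require Import Defs.
From mathcomp Require Import all_boot all_order all_algebra.
Import Order.TTheory GRing.Theory Num.Theory.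
Set Implicit Arguments. Unset Strict Implicit. Unset Printing Implicit Defensive.
Local Open Scope ring_scope.

(* Given the history, the conditional probability of (s^t, a^t) = (s, a) is
   the one-step factor P(s | s^{t-1}, a^{t-1}) * pi^q(a | s).  The first factor
   is at least alpha.  In pi^q(a | s) the numerator is at least delta since
   q is in Delta_delta, while the denominator is the mass that the probability
   distribution q puts on the state s, hence at most 1; so pi^q(a | s) >= delta. *)

Section OccupancyMeasure.
Variables (R : realFieldType) (S A : finType).
Implicit Types (q : occ R S A) (s : S) (a : A).

Lemma occ_state_mass_le1 q s :
  in_Delta q -> \sum_(a' : A) \sum_(s' : S) q (s, a', s') <= 1.
Proof.
case=> q_ge0 q_sum1 _.
have -> : 1 = \sum_(s0 : S) \sum_(a' : A) \sum_(s' : S) q (s0, a', s').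
  by rewrite -q_sum1 pair_big pair_big /=; apply: eq_bigr => -[[]].
rewrite (bigD1 s) //= lerDl.
by apply: sumr_ge0 => ? _; apply: sumr_ge0 => ? _; apply: sumr_ge0.
Qed.

Lemma occ_action_mass_le_state_mass q s a :
  (forall x, 0 <= q x) ->
  \sum_(s' : S) q (s, a, s') <= \sum_(a' : A) \sum_(s' : S) q (s, a', s').
Proof.
move=> q_ge0; rewrite (bigD1 a) //= lerDl.
by apply: sumr_ge0 => ? _; apply: sumr_ge0.
Qed.

Lemma pi_of_ge delta q s a :
  0 < delta -> in_Delta_delta delta q -> delta <= Defs.pi_of q a s.
Proof.
move=> delta_gt0 [q_Delta q_delta]; have [q_ge0 _ _] := q_Delta.
have num_ge := q_delta s a.
have den_le1 := occ_state_mass_le1 s q_Delta.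
have den_gt0 : 0 < \sum_(a' : A) \sum_(s' : S) q (s, a', s').
  exact: lt_le_trans (le_trans num_ge (occ_action_mass_le_state_mass s a q_ge0)).
apply: (le_trans num_ge).
rewrite /Defs.pi_of ler_pdivlMr // ler_piMr //.
exact: le_trans (ltW delta_gt0) num_ge.
Qed.

End OccupancyMeasure.

Section Trajectory.
Variables (R : realFieldType) (S A : finType).
Variables (P : S -> A -> S -> R) (mu : S -> R).
Variables (newep : hist S A -> bool) (qhat : hist S A -> occ R S A).

Lemma traj_prob_aux_rcons pre h s a :
  traj_prob_aux mu P newep qhat pre (rcons h (s, a)) =
  traj_prob_aux mu P newep qhat pre h * step_prob mu P newep qhat (pre ++ h) s a.
Proof.
elim: h pre => [|[s1 a1] h IH] pre /=; first by rewrite cats0 mulr1 mul1r.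
by rewrite IH mulrA cat_rcons.
Qed.

Lemma traj_prob_rcons h s a :
  traj_prob mu P newep qhat (rcons h (s, a)) =
  traj_prob mu P newep qhat h * step_prob mu P newep qhat h s a.
Proof. exact: traj_prob_aux_rcons. Qed.

Lemma step_prob_ge alpha delta pre s a :
  0 < alpha -> (forall s a s', alpha <= P s a s') ->
  0 < delta -> (forall g, in_Delta_delta delta (qhat g)) ->
  pre != [::] -> alpha * delta <= step_prob mu P newep qhat pre s a.
Proof.
move=> alpha_gt0 alpha_le_P delta_gt0 qhat_Delta.
case: pre => [//|x h] _; rewrite /step_prob; case: (last x h) => s' a'.
apply: ler_pM; [exact: ltW | exact: ltW | exact: alpha_le_P |].
exact: pi_of_ge.
Qed.

End Trajectory.

Theorem lemma6 (R : realFieldType) (S A : finType)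
  (P : S -> A -> S -> R) (alpha delta : R) (mu : S -> R)
  (newep : hist S A -> bool) (qhat : hist S A -> occ R S A) :
  0 < alpha ->
  (forall s a s', alpha <= P s a s') ->
  (forall s a, \sum_(s' : S) P s a s' = 1) ->
  (forall s, 0 <= mu s) -> \sum_(s : S) mu s = 1 ->
  0 < delta < 1 ->
  (forall g : hist S A, in_Delta_delta delta (qhat g)) ->
  forall (t : nat) (h : hist S A), (2 <= t)%N -> size h = t.-1 ->
  0 < traj_prob mu P newep qhat h ->
  forall (s : S) (a : A),
    alpha * delta <=
      traj_prob mu P newep qhat (rcons h (s, a)) / traj_prob mu P newep qhat h.
Proof.
move=> alpha_gt0 alpha_le_P _ _ _ /andP[delta_gt0 _] qhat_Delta t h t_ge2 size_h
  h_pos s a.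
rewrite traj_prob_rcons mulrAC mulfV ?gt_eqF // mul1r.
apply: step_prob_ge => //.
by rewrite -size_eq0 size_h; case: t t_ge2 {size_h} => [|[|t]].
Qed.
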